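(* Let $\mathbf P=UV^\top$ be an ergodic transition matrix on $\{1,\dots,p\}$ with stationary distribution $\pi$, where $U,V\in\mathbb R^{p\times r}$ are entrywise nonnegative with $U\mathbf 1_r=\mathbf 1_p$, $V^\top\mathbf 1_p=\mathbf 1_r$. Suppose there are constants $c_1,C_1,c_2>0$ with $c_1p^{-1}\le\pi_j\le C_1p^{-1}$ for all $j$, $\lambda_{\min}(U^\top[\mathrm{diag}(\pi)]^2U)\ge c_2p^{-1}r^{-1}$ and $\lambda_{\min}(V^\top[\mathrm{diag}(\pi)]^{-1}V)\ge c_2r$. Let $\sigma_1\ge\dots\ge\sigma_r$ be the $r$ largest singular values of $\mathbf Q=\mathrm{diag}(\pi)\mathbf P[\mathrm{diag}(\pi)]^{-1/2}$. Then $$c_2p^{-1/2}\le\sigma_r\le\sigma_1\le C_1c_1^{-1/2}p^{-1/2}.$$ *)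

(* Real numbers are an arbitrary real closed field R
   (the statement is algebraic, so this includes the usual reals). *)
From mathcomp Require Import all_boot all_order all_algebra.
Set Implicit Arguments. Unset Strict Implicit. Unset Printing Implicit Defensive.
Import Order.TTheory GRing.Theory Num.Theory.
Local Open Scope ring_scope.

Section Defs.
Variable R : rcfType.

Definition mxpow (p : nat) (P : 'M[R]_p) (k : nat) : 'M[R]_p :=
  iter k (mulmx P) 1%:M.

Definition transition_matrix (p : nat) (P : 'M[R]_p) : Prop :=
  (forall i j, 0 <= P i j) /\ (forall i, \sum_j P i j = 1).

Definition irreducible (p : nat) (P : 'M[R]_p) : Prop :=
  forall i j, exists k, 0 < mxpow P k i j.

(* aperiodic: every state has period 1, the period of i being the gcd of
   {k >= 1 | P^k(i,i) > 0} (written out: its only common divisor is 1) *)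
Definition aperiodic (p : nat) (P : 'M[R]_p) : Prop :=
  forall i d, (forall k, (0 < k)%N -> 0 < mxpow P k i i -> (d %| k)%N) -> d = 1%N.

Definition ergodic (p : nat) (P : 'M[R]_p) : Prop :=
  transition_matrix P /\ irreducible P /\ aperiodic P.

Definition stationary_distribution (p : nat) (P : 'M[R]_p) (pi : 'rV[R]_p) : Prop :=
  (forall j, 0 <= pi 0 j) /\ \sum_j pi 0 j = 1 /\ pi *m P = pi.

Definition lambda_min_ge (n : nat) (A : 'M[R]_n) (c : R) : Prop :=
  forall a, eigenvalue A a -> c <= a.

(* s is the list of ALL singular values of Q (with multiplicity), in
   nonincreasing order: s = map sqrt e where e lists the eigenvalues of
   Q^T Q (roots of its characteristic polynomial, with multiplicity),
   sorted nonincreasingly. *)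
Definition singular_values (p : nat) (Q : 'M[R]_p) (s : seq R) : Prop :=
  exists e : seq R,
    sorted (fun x y => y <= x) e /\
    char_poly (Q^T *m Q) = \prod_(x <- e) ('X - x%:P) /\
    s = map Num.sqrt e.

End Defs.

From mathcomp Require Import all_boot all_order all_algebra.
From mathcomp Require Import ring complex.
Set Implicit Arguments.
Unset Strict Implicit.
Unset Printing Implicit Defensive.
Import Order.TTheory GRing.Theory Num.Theory.
Local Open Scope ring_scope.

(* Write Q = A B with A = diag(pi) U (p x r) and B = V^T diag(pi)^(-1/2) (r x p), so that
   Q^T Q = B^T H B, where H = A^T A and G = B B^T are the two matrices of the hypotheses.
   Upper bound: (Q x)_i = pi_i (P y)_i with y = diag(pi)^(-1/2) x, so Jensen on each row
   of the stochastic matrix P together with stationarity pi P = pi gives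
   |Q x|^2 <= max_j pi_j |x|^2 <= C1/p |x|^2; finally C1/p <= C1^2/(c1 p) as c1 <= C1.
   Lower bound: a vector v = w B of the r-dimensional row space of B satisfies
   v Q^T Q v^T = (w G) H (w G)^T >= lambda_min(H) |w G|^2
              >= lambda_min(H) lambda_min(G) w G w^T = c2^2/p |v|^2,
   so by the min-max principle Q^T Q has at least r eigenvalues >= c2^2/p. *)

Lemma char_poly_similar (F : fieldType) n (P A : 'M[F]_n) : P \in unitmx ->
  char_poly (invmx P *m A *m P) = char_poly A.
Proof.
move=> P_unit; rewrite /char_poly /char_poly_mx.
have XE : 'X%:M = map_mx polyC (invmx P) *m 'X%:M *m map_mx polyC P :> 'M_n.
  by rewrite -mulmxA -scalar_mxC mulmxA -map_mxM mulVmx // map_mx1 mul1mx.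
rewrite {1}XE !map_mxM -mulmxBl -mulmxBr !det_mulmx !det_map_mx.
by rewrite mulrC mulrA -rmorphM -det_mulmx mulmxV // det1 rmorph1 mul1r.
Qed.

Lemma invmx_diag (F : fieldType) n (d : 'rV[F]_n) : (forall j, d 0 j != 0) ->
  invmx (diag_mx d) = diag_mx (\row_j (d 0 j)^-1).
Proof.
move=> d_neq0; have dV : diag_mx d *m diag_mx (\row_j (d 0 j)^-1) = 1%:M.
  by apply/matrixP => i j; rewrite mulmx_diag !mxE; case: eqP => [->|]; rewrite ?divff ?mulr0n.
have [d_unit _] := mulmx1_unit dV.
by rewrite -[invmx _]mulmx1 -dV mulmxA mulVmx // mul1mx.
Qed.

Lemma diag_invsqrt_sqr (F : rcfType) n (d : 'rV[F]_n) : (forall j, 0 < d 0 j) ->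
  diag_mx (\row_j (Num.sqrt (d 0 j))^-1) *m diag_mx (\row_j (Num.sqrt (d 0 j))^-1)
  = invmx (diag_mx d).
Proof.
move=> d_gt0; rewrite mulmx_diag invmx_diag => [|j]; last by rewrite gt_eqF.
congr diag_mx; apply/rowP => j.
by rewrite !mxE -invfM -expr2 sqr_sqrtr // ltW.
Qed.

Lemma eigenvalue_char_poly_factor (F : fieldType) n (S : 'M[F]_n) (d : 'rV[F]_n) i :
  char_poly S = \prod_j ('X - (d 0 j)%:P) -> eigenvalue S (d 0 i).
Proof.
move=> chE; rewrite eigenvalue_root_char chE /root horner_prod (bigD1 i) //=.
by rewrite hornerXsubC subrr mul0r.
Qed.

Lemma lambda_min_gt0_row_free (R : rcfType) n (S : 'M[R]_n) c :
  lambda_min_ge S c -> 0 < c -> row_free S.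
Proof.
move=> S_ge c_gt0; apply: contraTT c_gt0 => S_singular; rewrite -leNgt.
by apply: S_ge; rewrite /eigenvalue /eigenspace raddf0 subr0 kermx_eq0.
Qed.

Lemma capmx_neq0 (F : fieldType) m1 m2 n (A : 'M[F]_(m1, n)) (B : 'M[F]_(m2, n)) :
  (n < \rank A + \rank B)%N -> (A :&: B)%MS != 0.
Proof.
rewrite -mxrank_eq0 -lt0n -mxrank_sum_cap => lt_n.
by rewrite -(ltn_add2l (\rank (A + B))) addn0 (leq_ltn_trans (rank_leq_col _)).
Qed.

Lemma sorted_ge_count_nth (R : realDomainType) (e : seq R) t k :
  sorted (fun x y => y <= x) e -> (k < count (fun x => (t <= x)%R) e)%N ->
  t <= e`_k.
Proof.
elim: e k => [|a e IHe] [|k] //= e_sorted.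
  case: (lerP t a) => // a_lt; rewrite add0n -has_count => /hasP [x xe t_le_x].
  have /allP /(_ x xe) x_le_a := order_path_min (rev_trans le_trans) e_sorted.
  by rewrite ltNge (le_trans t_le_x x_le_a) in a_lt.
move=> k_lt; apply: IHe; first exact: path_sorted e_sorted.
by move: k_lt; case: (t <= a); rewrite ?add1n ?add0n ?ltnS // => /ltnW.
Qed.

Lemma sorted_spectrum_bounds (F : realFieldType) n (M : 'M[F]_n) (d : 'rV[F]_n) r t K :
  char_poly M = \prod_i ('X - (d 0 i)%:P) -> (0 < r)%N ->
  (r + #|[pred i | (d 0 i < t)%R]| <= n)%N ->
  (forall a, eigenvalue M a -> a <= K) ->
  exists e : seq F, [/\ sorted (fun x y => y <= x) e,
    char_poly M = \prod_(x <- e) ('X - x%:P),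
    t <= e`_r.-1, e`_r.-1 <= e`_0 & e`_0 <= K].
Proof.
move=> chE r_gt0 r_count M_le.
have ge_total : total (fun x y : F => y <= x) by move=> x y; exact: le_total.
pose e := sort (fun x y : F => y <= x) [seq d 0 i | i <- index_enum 'I_n].
have e_sorted : sorted (fun x y => y <= x) e := sort_sorted ge_total _.
have chEe : char_poly M = \prod_(x <- e) ('X - x%:P).
  by rewrite chE (perm_big _ (permEl (perm_sort _ _))) big_map.
have size_e : size e = n.
  by have := size_char_poly M; rewrite chEe size_prod_XsubC => -[].
have r_le_count : (r <= count (fun x => (t <= x)%R) e)%N.
  rewrite count_sort count_map -sum1_count sum1_card.
  rewrite -(leq_add2r #|[pred i | (d 0 i < t)%R]|) (leq_trans r_count) //.
  rewrite -[X in (X <= _)%N]card_ord -(cardC [pred i | (t <= d 0 i)%R]) leq_add2l.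
  by apply/eq_leq/eq_card => i; rewrite !inE ltNge.
have r_lt_size : (r.-1 < size e)%N.
  by rewrite size_e prednK //; exact: leq_trans (leq_addr _ _) r_count.
exists e; split => //.
- by apply: sorted_ge_count_nth; rewrite ?prednK.
- apply: (sorted_leq_nth (rev_trans le_trans) (@lexx _ _) 0 e_sorted) => //.
  by rewrite inE (leq_ltn_trans _ r_lt_size).
have : e`_0 \in e by rewrite mem_nth // (leq_ltn_trans _ r_lt_size).
by rewrite mem_sort => /mapP [i _ ->]; exact/M_le/(eigenvalue_char_poly_factor _ chE).
Qed.

Section UnitaryCoordinates.
Variable C : numClosedFieldType.
Local Open Scope sesquilinear_scope.

Lemma trmxC_mul m n k (A : 'M[C]_(m, n)) (B : 'M[C]_(n, k)) :
  (A *m B)^t* = B^t* *m A^t*.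
Proof. by rewrite trmx_mul map_mxM. Qed.

Lemma qf_conj_diag n (P : 'M[C]_n) (e y : 'rV[C]_n) :
  (y *m (P^t* *m diag_mx e *m P) *m y^t*) 0 0
  = \sum_i e 0 i * `|(y *m P^t*) 0 i| ^+ 2.
Proof.
set z := y *m P^t*.
have -> : y *m (P^t* *m diag_mx e *m P) *m y^t* = z *m diag_mx e *m z^t*.
  by rewrite /z trmxC_mul trmxCK !mulmxA.
rewrite mul_mx_diag !mxE; apply: eq_bigr => i _.
by rewrite !mxE normCK mulrAC mulrC.
Qed.

Lemma qf_conj_diag_sqr n (P : 'M[C]_n) (e y : 'rV[C]_n) : P \is unitarymx ->
  (y *m ((P^t* *m diag_mx e *m P) *m (P^t* *m diag_mx e *m P)) *m y^t*) 0 0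
  = \sum_i (e 0 i * e 0 i) * `|(y *m P^t*) 0 i| ^+ 2.
Proof.
move=> P_unitary.
transitivity ((y *m (P^t* *m diag_mx (\row_i (e 0 i * e 0 i)) *m P) *m y^t*) 0 0).
  by rewrite -mulmx_diag !mulmxA (mulmxtVK _ P_unitary).
by rewrite qf_conj_diag; apply: eq_bigr => i _; rewrite mxE.
Qed.

Lemma dotmx_unitary n (P : 'M[C]_n) (y : 'rV[C]_n) : P \is unitarymx ->
  (y *m y^t*) 0 0 = \sum_i `|(y *m P^t*) 0 i| ^+ 2.
Proof.
move=> P_unitary; have := qf_conj_diag P (const_mx 1) y.
rewrite diag_const_mx mulmx1 -[P^t*]mul1mx mulmxKtV // mul1mx mulmx1 => ->.
by apply: eq_bigr => i _; rewrite mxE mul1r.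
Qed.

End UnitaryCoordinates.

(* MathComp's spectral theorem is stated over a numClosedFieldType, so real symmetric
   matrices are diagonalised by unitary matrices over R[i]. *)
Section Complexification.
Variable R : rcfType.
Local Notation "A ^c" := (map_mx (real_complex R) A) (format "A ^c").
Local Open Scope sesquilinear_scope.
Local Open Scope complex_scope.

Lemma map_real_trC m n (A : 'M[R]_(m, n)) : (A^c)^t* = A^T^c.
Proof. by apply/matrixP => i j; rewrite !mxE; exact: conjc_real. Qed.

Lemma symmetric_spectral n (S : 'M[R]_n) : S^T = S ->
  exists2 P : 'M[R[i]]_n, P \is unitarymx &
  exists d : 'rV[R]_n, S^c = P^t* *m diag_mx d^c *m P /\
                       char_poly S = \prod_i ('X - (d 0 i)%:P).
Proof.
move=> S_sym; have SC_herm : S^c \is hermsymmx.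
  by apply/is_hermitianmxP; rewrite expr0 scale1r map_real_trC S_sym.
have /orthomx_spectralP SE := hermitian_normalmx SC_herm.
have /mxOverP sp_real := hermitian_spectral_diag_real SC_herm.
set P := spectralmx _ in SE; set sp := spectral_diag _ in SE sp_real.
have P_unitary : P \is unitarymx := spectral_unitarymx _.
exists P => //; exists (\row_i complex.Re (sp 0 i)).
have spE : (\row_i complex.Re (sp 0 i))^c = sp.
  by apply/rowP => i; rewrite !mxE RRe_real.
rewrite spE -invmx_unitary //; split=> //.
apply: (@map_poly_inj _ _ (real_complex R)).
rewrite map_char_poly SE char_poly_similar ?unitarymx_unit //.
rewrite char_poly_trig ?diag_mx_is_trig // rmorph_prod; apply: eq_bigr => i _.
by rewrite /= map_polyXsubC !mxE eqxx mulr1n -{1}spE !mxE.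
Qed.

Lemma lambda_min_qf_ge n (S : 'M[R]_n) c : S^T = S -> lambda_min_ge S c ->
  forall y : 'rV[R[i]]_n, c%:C * (y *m y^t*) 0 0 <= (y *m S^c *m y^t*) 0 0.
Proof.
move=> S_sym S_ge y; have [P P_unitary [d [SE chE]]] := symmetric_spectral S_sym.
rewrite SE qf_conj_diag (dotmx_unitary _ P_unitary) mulr_sumr.
apply: ler_sum => i _; rewrite !mxE; apply: ler_wpM2r; first exact: exprn_ge0.
by rewrite lecR; apply/S_ge/(eigenvalue_char_poly_factor _ chE).
Qed.

Lemma lambda_min_qf_sqr_ge n (S : 'M[R]_n) c :
  S^T = S -> lambda_min_ge S c -> 0 <= c -> forall y : 'rV[R[i]]_n,
  c%:C * (y *m S^c *m y^t*) 0 0 <= (y *m (S^c *m S^c) *m y^t*) 0 0.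
Proof.
move=> S_sym S_ge c_ge0 y; have [P P_unitary [d [SE chE]]] := symmetric_spectral S_sym.
rewrite SE qf_conj_diag qf_conj_diag_sqr // mulr_sumr.
apply: ler_sum => i _; rewrite !mxE mulrA.
have c_le_d : c <= d 0 i by apply/S_ge/(eigenvalue_char_poly_factor _ chE).
apply: ler_wpM2r; first exact: exprn_ge0.
by apply: ler_wpM2r; rewrite lecR // (le_trans c_ge0).
Qed.

Lemma spectral_qf_lt n (P : 'M[R[i]]_n) (d : 'rV[R]_n) t (v : 'rV[R[i]]_n) :
  P \is unitarymx -> v != 0 -> (forall j, t <= d 0 j -> (v *m P^t*) 0 j = 0) ->
  (v *m (P^t* *m diag_mx d^c *m P) *m v^t*) 0 0 < t%:C * (v *m v^t*) 0 0.
Proof.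
move=> P_unitary v_neq0 z_supp.
rewrite qf_conj_diag (dotmx_unitary _ P_unitary) mulr_sumr.
set z := v *m P^t* in z_supp *.
have /matrix0Pn [i0 [j0 zj0_neq0]] : z != 0.
  by apply: contraNneq v_neq0 => z0; rewrite -(mulmxKtV v P_unitary) // -/z z0 mul0mx.
rewrite ord1 in zj0_neq0; have dj0_lt : d 0 j0 < t.
  by rewrite ltNge; apply: contra zj0_neq0 => /z_supp ->.
rewrite (bigD1 j0) //= [X in _ < X](bigD1 j0) //=; apply: ltr_leD.
  by rewrite [d^c 0 _]mxE ltr_pM2r ?ltcR // exprn_gt0 // normr_gt0.
apply: ler_sum => j _; rewrite [d^c 0 _]mxE.
have [/z_supp -> | dj_lt] := leP t (d 0 j); first by rewrite normr0 expr0n !mulr0.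
by apply: ler_wpM2r; [exact: exprn_ge0 | rewrite lecR; exact: ltW].
Qed.

(* Min-max principle: otherwise the span of the eigenvectors with eigenvalue < t would
   meet W in a nonzero vector. *)
Lemma spectral_count_lt n r (P : 'M[R[i]]_n) (d : 'rV[R]_n) (W : 'M[R[i]]_(r, n)) t :
  P \is unitarymx -> \rank W = r ->
  (forall v : 'rV_n, (v <= W)%MS ->
     t%:C * (v *m v^t*) 0 0 <= (v *m (P^t* *m diag_mx d^c *m P) *m v^t*) 0 0) ->
  (r + #|[pred i | (d 0 i < t)%R]| <= n)%N.
Proof.
move=> P_unitary rkW W_ge; set L := [pred i | d 0 i < t].
rewrite leqNgt; apply/negP => n_lt.
pose PL := rowsub (fun a : 'I_#|L| => enum_val a) P.
have PL_unitary : PL \is unitarymx.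
  apply/unitarymxP/matrixP => a b.
  have := congr1 (fun M : 'M_n => M (enum_val a) (enum_val b)) (unitarymxP P_unitary).
  rewrite !mxE (inj_eq enum_val_inj) => <-.
  by apply: eq_bigr => j _; rewrite !mxE.
have /rowV0Pn [v] : (PL :&: W)%MS != 0.
  by apply: capmx_neq0; rewrite mxrank_unitary // rkW addnC.
rewrite sub_capmx => /andP [/submxP [u ->] /W_ge] + uPL_neq0.
rewrite lt_geF //; apply: spectral_qf_lt => // j dj_ge.
rewrite -mulmxA /PL mul_rowsub_mx (unitarymxP P_unitary) !mxE big1 // => a _.
rewrite !mxE; case: eqP => [aj | _]; last by rewrite mulr0.
by have := enum_valP a; rewrite inE aj ltNge dj_ge.
Qed.

Lemma factor_qf_ge p r (A : 'M[R]_(p, r)) (B : 'M[R]_(r, p)) a b :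
  0 <= a -> 0 <= b -> lambda_min_ge (A^T *m A) a -> lambda_min_ge (B *m B^T) b ->
  forall v : 'rV[R[i]]_p, (v <= B^c)%MS ->
  (a * b)%:C * (v *m v^t*) 0 0 <= (v *m ((A *m B)^T *m (A *m B))^c *m v^t*) 0 0.
Proof.
move=> a_ge0 b_ge0 H_ge G_ge _ /submxP [w ->].
have H_sym : (A^T *m A)^T = A^T *m A by rewrite trmx_mul trmxK.
have G_sym : (B *m B^T)^T = B *m B^T by rewrite trmx_mul trmxK.
have HcE : (A^T *m A)^c = (A^c)^t* *m A^c by rewrite (map_real_trC A) -map_mxM.
have GcE : (B *m B^T)^c = B^c *m (B^c)^t* by rewrite (map_real_trC B) -map_mxM.
have McE : ((A *m B)^T *m (A *m B))^c = (A^c *m B^c)^t* *m (A^c *m B^c).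
  by rewrite -map_mxM (map_real_trC (A *m B)) -map_mxM.
have := lambda_min_qf_ge H_sym H_ge (w *m (B *m B^T)^c).
have := lambda_min_qf_sqr_ge G_sym G_ge b_ge0 w.
rewrite McE HcE GcE; move: (A^c) (B^c) => Ac Bc.
rewrite !trmxC_mul !trmxCK !mulmxA => G_qf H_qf.
rewrite rmorphM -mulrA; apply: le_trans H_qf.
by rewrite ler_wpM2l // ler0c.
Qed.

Lemma singular_values_factor_bounds p r (A : 'M[R]_(p, r)) (B : 'M[R]_(r, p)) a b K :
  (0 < r)%N -> 0 <= a -> 0 < b ->
  lambda_min_ge (A^T *m A) a -> lambda_min_ge (B *m B^T) b ->
  (forall x, eigenvalue ((A *m B)^T *m (A *m B)) x -> x <= K) ->
  exists s, [/\ singular_values (A *m B) s, Num.sqrt (a * b) <= s`_r.-1,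
               s`_r.-1 <= s`_0 & s`_0 <= Num.sqrt K].
Proof.
move=> r_gt0 a_ge0 b_gt0 H_ge G_ge M_le.
have M_sym : ((A *m B)^T *m (A *m B))^T = (A *m B)^T *m (A *m B).
  by rewrite trmx_mul trmxK.
have [P P_unitary [d [ME chE]]] := symmetric_spectral M_sym.
have rkB : \rank B^c = r.
  rewrite mxrank_map; apply/eqP; rewrite eqn_leq rank_leq_row /=.
  have /eqP {1}<- := lambda_min_gt0_row_free G_ge b_gt0.
  exact: mxrankM_maxl.
have r_count : (r + #|[pred i | (d 0 i < a * b)%R]| <= p)%N.
  apply: (spectral_count_lt P_unitary rkB) => v vB; rewrite -ME.
  exact: factor_qf_ge a_ge0 (ltW b_gt0) H_ge G_ge v vB.
have [e [e_sorted chEe ab_le mid_le le_K]] :=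
  sorted_spectrum_bounds chE r_gt0 r_count M_le.
have nth_sqrt k : (map Num.sqrt e)`_k = Num.sqrt e`_k.
  have [k_lt | k_ge] := ltnP k (size e); first exact: nth_map.
  by rewrite !nth_default ?size_map ?sqrtr0.
have ab_ge0 : 0 <= a * b by rewrite mulr_ge0 // ltW.
have er_ge0 := le_trans ab_ge0 ab_le.
have e0_ge0 := le_trans er_ge0 mid_le.
exists (map Num.sqrt e); rewrite !nth_sqrt !ler_sqrt ?(le_trans e0_ge0 le_K) //.
by split=> //; exists e.
Qed.

End Complexification.

Lemma sqr_weighted_mean_le (F : realFieldType) n (w y : 'I_n -> F) :
  (forall k, 0 <= w k) -> \sum_k w k = 1 ->
  (\sum_k w k * y k) ^+ 2 <= \sum_k w k * y k ^+ 2.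
Proof.
move=> w_ge0 w_sum1; set m := \sum_k w k * y k.
have var_ge0 : 0 <= \sum_k w k * (y k - m) ^+ 2.
  by apply: sumr_ge0 => k _; rewrite mulr_ge0 ?sqr_ge0.
have varE : \sum_k w k * (y k - m) ^+ 2 = \sum_k w k * y k ^+ 2 - m ^+ 2.
  transitivity (\sum_k (w k * y k ^+ 2 - (w k * y k) *+ 2 * m + w k * m ^+ 2)).
    by apply: eq_bigr => k _; rewrite sqrrB; ring.
  by rewrite !big_split /= sumrN -!mulr_suml sumrMnl w_sum1 -/m; ring.
by rewrite -subr_ge0 -varE.
Qed.

Lemma stationary_scaled_sqnorm_le (F : rcfType) p (P : 'M[F]_p) (pi : 'rV[F]_p) K
    (x : 'cV[F]_p) :
  transition_matrix P -> stationary_distribution P pi ->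
  (forall j, 0 < pi 0 j) -> (forall j, pi 0 j <= K) ->
  \sum_i ((diag_mx pi *m P *m diag_mx (\row_j (Num.sqrt (pi 0 j))^-1) *m x) i 0) ^+ 2
   <= K * \sum_j x j 0 ^+ 2.
Proof.
move=> [P_ge0 P_sum1] [_ [_ pi_stat]] pi_gt0 pi_le.
pose y k := x k 0 / Num.sqrt (pi 0 k).
have QxE i : (diag_mx pi *m P *m diag_mx (\row_j (Num.sqrt (pi 0 j))^-1) *m x) i 0
    = pi 0 i * \sum_k P i k * y k.
  rewrite mxE mulr_sumr; apply: eq_bigr => k _.
  by rewrite mul_mx_diag mul_diag_mx !mxE /y; ring.
have term_le i : (pi 0 i * \sum_k P i k * y k) ^+ 2 <=
    K * (pi 0 i * \sum_k P i k * y k ^+ 2).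
  have S_le := sqr_weighted_mean_le y (P_ge0 i) (P_sum1 i).
  rewrite exprMn; apply: le_trans (ler_wpM2l (sqr_ge0 _) S_le) _.
  rewrite expr2 -mulrA; apply: ler_wpM2r (pi_le i).
  by rewrite mulr_ge0 ?(ltW (pi_gt0 i)) ?sumr_ge0 // => k _; rewrite mulr_ge0 ?sqr_ge0.
have sumE : \sum_i pi 0 i * \sum_k P i k * y k ^+ 2 = \sum_k x k 0 ^+ 2.
  under eq_bigr do rewrite mulr_sumr; rewrite exchange_big /=; apply: eq_bigr => k _.
  under eq_bigr do rewrite mulrA; rewrite -mulr_suml.
  have -> : \sum_i pi 0 i * P i k = pi 0 k by rewrite -[in RHS]pi_stat mxE.
  by rewrite /y expr_div_n sqr_sqrtr ?(ltW (pi_gt0 k)) // mulrC divfK // gt_eqF.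
under eq_bigr do rewrite QxE.
apply: (le_trans (y := \sum_i K * (pi 0 i * \sum_k P i k * y k ^+ 2))).
  by apply: ler_sum => i _; exact: term_le.
by rewrite -mulr_sumr sumE.
Qed.

Lemma eigenvalue_trmx_mul_le (F : realFieldType) n (Q : 'M[F]_n) K :
  (forall x : 'cV_n, \sum_i (Q *m x) i 0 ^+ 2 <= K * \sum_i x i 0 ^+ 2) ->
  forall a, eigenvalue (Q^T *m Q) a -> a <= K.
Proof.
move=> Q_le a /eigenvalueP [v vQQ v_neq0].
have sqnormE (u : 'cV[F]_n) : (u^T *m u) 0 0 = \sum_i u i 0 ^+ 2.
  by rewrite mxE; apply: eq_bigr => i _; rewrite mxE expr2.
have v_sqnorm_gt0 : 0 < \sum_i v^T i 0 ^+ 2.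
  have /matrix0Pn [i0 [j vj_neq0]] := v_neq0.
  rewrite lt_def psumr_neq0 => [|i _]; last exact: sqr_ge0.
  rewrite sumr_ge0 => [|i _]; last exact: sqr_ge0.
  rewrite andbT; apply/hasP; exists j; first exact: mem_index_enum.
  by rewrite mxE -(ord1 i0) lt0r sqrf_eq0 vj_neq0 sqr_ge0.
rewrite -(ler_pM2r v_sqnorm_gt0); apply: le_trans (Q_le v^T).
by rewrite -!sqnormE trmx_mul trmxK mulmxA -(mulmxA v) vQQ -scalemxAl [X in _ <= X]mxE.
Qed.

Lemma sum_eq1_gt0 (R : nzRingType) n (F : 'I_n -> R) : \sum_i F i = 1 -> (0 < n)%N.
Proof. by case: n F => // F; rewrite big_ord0 => /eqP; rewrite eq_sym oner_eq0. Qed.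

Lemma sqrtr_sqr_div (F : rcfType) (c m : F) : 0 <= c -> 0 <= m ->
  Num.sqrt (c ^+ 2 / m) = c / Num.sqrt m.
Proof. by move=> c_ge0 m_ge0; rewrite sqrtrM ?sqr_ge0 // sqrtr_sqr ger0_norm ?sqrtrV. Qed.

Lemma sqrtr_div_le (F : rcfType) (c C m : F) : 0 < c -> c <= C -> 0 < m ->
  Num.sqrt (C / m) <= C / Num.sqrt c / Num.sqrt m.
Proof.
move=> c_gt0 c_le_C m_gt0; have C_gt0 := lt_le_trans c_gt0 c_le_C.
have rhs_ge0 : 0 <= C / Num.sqrt c / Num.sqrt m by rewrite !divr_ge0 ?sqrtr_ge0 // ltW.
rewrite -(ger0_norm rhs_ge0) -sqrtr_sqr ler_sqrt ?sqr_ge0 //.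
rewrite !expr_div_n !sqr_sqrtr ?(ltW c_gt0) ?(ltW m_gt0) // ler_pM2r ?invr_gt0 //.
by rewrite ler_pdivlMr // expr2 ler_pM2l.
Qed.

Theorem mainTheorem6 (R : rcfType) (c1 C1 c2 : R) (p r : nat)
    (U V : 'M[R]_(p, r)) (pi : 'rV[R]_p) :
  0 < c1 -> 0 < C1 -> 0 < c2 ->
  (forall i j, 0 <= U i j) -> (forall i j, 0 <= V i j) ->
  U *m const_mx 1 = const_mx 1 :> 'cV[R]_p ->
  V^T *m const_mx 1 = const_mx 1 :> 'cV[R]_r ->
  ergodic (U *m V^T) ->
  stationary_distribution (U *m V^T) pi ->
  (forall j, c1 / p%:R <= pi 0 j /\ pi 0 j <= C1 / p%:R) ->
  lambda_min_ge (U^T *m (diag_mx pi *m diag_mx pi) *m U) (c2 / (p%:R * r%:R)) ->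
  lambda_min_ge (V^T *m invmx (diag_mx pi) *m V) (c2 * r%:R) ->
  let Q := diag_mx pi *m (U *m V^T) *m
             diag_mx (\row_j (Num.sqrt (pi 0 j))^-1) in
  exists s : seq R,
    singular_values Q s /\
    c2 / Num.sqrt p%:R <= s`_(r.-1) /\
    s`_(r.-1) <= s`_0 /\
    s`_0 <= C1 / Num.sqrt c1 / Num.sqrt p%:R.
Proof.
move=> c1_gt0 _ c2_gt0 _ _ U1 _ [P_stoch _] pi_stat pi_bds H_ge G_ge Q.
have p_gt0 : (0 < p)%N := sum_eq1_gt0 pi_stat.2.1.
have r_gt0 : (0 < r)%N.
  by have := congr1 (fun X : 'cV_p => X (Ordinal p_gt0) 0) U1; rewrite !mxE => /sum_eq1_gt0.
have pi_gt0 j : 0 < pi 0 j by apply: lt_le_trans (pi_bds j).1; rewrite divr_gt0 ?ltr0n.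
have M_le : forall a, eigenvalue (Q^T *m Q) a -> a <= C1 / p%:R.
  exact: eigenvalue_trmx_mul_le (fun x =>
    stationary_scaled_sqnorm_le x P_stoch pi_stat pi_gt0 (fun j => (pi_bds j).2)).
pose Dh := diag_mx (\row_j (Num.sqrt (pi 0 j))^-1).
have QE : Q = (diag_mx pi *m U) *m (V^T *m Dh) by rewrite /Q !mulmxA.
have HE : (diag_mx pi *m U)^T *m (diag_mx pi *m U) = U^T *m (diag_mx pi *m diag_mx pi) *m U.
  by rewrite trmx_mul tr_diag_mx !mulmxA.
have GE : (V^T *m Dh) *m (V^T *m Dh)^T = V^T *m invmx (diag_mx pi) *m V.
  by rewrite trmx_mul trmxK tr_diag_mx -diag_invsqrt_sqr // !mulmxA.
rewrite -HE in H_ge; rewrite -GE in G_ge; rewrite QE in M_le.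
have [||s [s_sv lo mid up]] := singular_values_factor_bounds r_gt0 _ _ H_ge G_ge M_le.
- by rewrite divr_ge0 ?mulr_ge0 // ltW.
- by rewrite mulr_gt0 ?ltr0n.
have lowE : Num.sqrt (c2 / (p%:R * r%:R) * (c2 * r%:R)) = c2 / Num.sqrt p%:R.
  rewrite -sqrtr_sqr_div ?ler0n ?(ltW c2_gt0) //; congr Num.sqrt.
  by field; rewrite !pnatr_eq0 -!lt0n p_gt0 r_gt0.
have c1_le_C1 : c1 <= C1.
  have [lo_pi hi_pi] := pi_bds (Ordinal p_gt0).
  by rewrite -(ler_pM2r (_ : 0 < p%:R^-1)) ?invr_gt0 ?ltr0n ?(le_trans lo_pi hi_pi).
exists s; rewrite QE -lowE; do ![split=> //].
by apply: le_trans up (sqrtr_div_le _ _ _); rewrite ?ltr0n.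
Qed.
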